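(* For all $s\in\mathbb{Z}$ and each $x\in V_{\alpha_s}$, $g_{\alpha_s}(x)=a_{\alpha_{s+1}}(b_{\alpha_s}(x))$.
   Context: Fix $d\ge1$, $\lambda>0$, scales $\alpha_s=\lambda 2^s$ ($s\in\mathbb{Z}$), and grids $G_{\alpha_s}\subset\mathbb{R}^d$ with $G_{\alpha_0}=\lambda\mathbb{Z}^d$ and $G_{\alpha_{s+1}}=2(G_{\alpha_s}-O_s)+O_s+\frac{\alpha_s}{2}\varepsilon_s$ for some $O_s\in G_{\alpha_s}$, $\varepsilon_s\in\{-1,1\}^d$. $\mathrm{Vor}_G(x)$ is the Voronoi cell of $x$ in the grid $G$ (closed cube of side $\alpha_s$ centered at $x$ for $G=G_{\alpha_s}$). The vertex map $g_{\alpha_s}:G_{\alpha_s}\to G_{\alpha_{s+1}}$ sends $x$ to the unique $y\in G_{\alpha_{s+1}}$ with $x\in \mathrm{Vor}_{G_{\alpha_{s+1}}}(y)$. Let $P\subset\mathbb{R}^d$ be finite. For $p\in P$, $a_{\alpha_s}(p)$ is the grid point of $G_{\alpha_s}$ whose Voronoi cell contains $p$ (assumed unique). The active vertices are $V_{\alpha_s}:=a_{\alpha_s}(P)$. For $v\in V_{\alpha_s}$, $b_{\alpha_s}(v)$ is the point of $P\cap \mathrm{Vor}_{G_{\alpha_s}}(v)$ closest to $v$, ties broken by a fixed total order on $P$. *)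

From mathcomp Require Import all_boot all_order all_algebra.
From mathcomp Require Import all_classical all_reals.
Set Implicit Arguments. Unset Strict Implicit. Unset Printing Implicit Defensive.
Import Order.TTheory GRing.Theory Num.Theory.
Local Open Scope classical_set_scope.
Local Open Scope ring_scope.

Section Grids.
Variables (R : realType) (d : nat).
Notation pt := 'rV[R]_d.

Definition edist (x y : pt) : R := Num.sqrt (\sum_(i < d) (x 0 i - y 0 i) ^+ 2).

Definition Vor (G : set pt) (x : pt) : set pt :=
  [set y | forall z, G z -> edist y x <= edist y z].

Definition alpha (lam : R) (s : int) : R := lam * (2%:R) ^ s.

Definition grid_family (lam : R) (G : int -> set pt) : Prop :=
  G 0%Z = [set (lam *: map_mx intr k) | k in [set: 'rV[int]_d]] /\
  forall s : int, exists O : pt, G s O /\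
    exists eps : pt, (forall i, eps 0 i = 1 \/ eps 0 i = -1) /\
      G (s + 1)%R = [set (2%:R *: (x - O) + O + (alpha lam s / 2%:R) *: eps)
                    | x in G s].

Definition gmap (G : int -> set pt) (s : int) (x : pt) : pt :=
  xget 0 [set y | G (s + 1)%R y /\ Vor (G (s + 1)%R) y x].

Definition amap (G : int -> set pt) (s : int) (p : pt) : pt :=
  xget 0 [set y | G s y /\ Vor (G s) y p].

Definition active (G : int -> set pt) (P : set pt) (s : int) : set pt :=
  [set amap G s p | p in P].

Definition bmap (G : int -> set pt) (P : set pt) (le : pt -> pt -> Prop)
    (s : int) (v : pt) : pt :=
  xget 0 [set q | P q /\ Vor (G s) v q /\
     forall q', P q' -> Vor (G s) v q' ->
       edist q v < edist q' v \/ (edist q v = edist q' v /\ le q q')].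

Definition total_order_on (P : set pt) (le : pt -> pt -> Prop) : Prop :=
  (forall p, P p -> le p p) /\
  (forall p q, P p -> P q -> le p q -> le q p -> p = q) /\
  (forall p q r, P p -> P q -> P r -> le p q -> le q r -> le p r) /\
  (forall p q, P p -> P q -> le p q \/ le q p).

Definition unique_assignment (G : int -> set pt) (P : set pt) : Prop :=
  forall (s : int) (p : pt), P p -> exists! y, G s y /\ Vor (G s) y p.

End Grids.

From mathcomp Require Import all_boot all_order all_algebra.
From mathcomp Require Import all_classical all_reals.
From mathcomp Require Import zify ring lra.
Set Implicit Arguments. Unset Strict Implicit. Unset Printing Implicit Defensive.
Import Order.TTheory GRing.Theory Num.Theory.
Local Open Scope classical_set_scope.
Local Open Scope ring_scope.

(* Every grid G_{alpha_s} is a coset y + alpha_s Z^d, so its Voronoi cells are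
   the closed cubes of side alpha_s, and a point strictly inside such a cube
   lies in no other cell.  Modulo alpha_{s+1}, the points of G_{alpha_{s+1}} are
   offset from those of G_{alpha_s} by alpha_s/2 in every coordinate, so a
   vertex x has a point y of G_{alpha_{s+1}} at coordinate distance exactly
   alpha_s/2, strictly inside the cube of side 2 alpha_s around y: hence
   g(x) = y.  The point b(x) lies in the cube of side alpha_s around x, hence
   within alpha_s of y in every coordinate, i.e. in Vor(y), and uniqueness of
   the assignment gives a(b(x)) = y. *)

Lemma seq_total_min (T : eqType) (r : T -> T -> Prop) (s : seq T) :
    {in s &, forall a b, r a b \/ r b a} ->
    {in s & &, forall a b c, r a b -> r b c -> r a c} ->
  s != [::] -> exists2 m, m \in s & {in s, forall q, r m q}.
Proof.
elim: s => [//|a s IH] tot trans _.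
have sub_s : {subset s <= a :: s} by move=> q sq; rewrite inE sq orbT.
have raa : r a a by case: (tot a a); rewrite ?mem_head.
have [->|s_nil] := eqVneq s [::].
  by exists a; [exact: mem_head | move=> q; rewrite inE => /eqP ->].
have s_tot : {in s &, forall a b, r a b \/ r b a}.
  by move=> x y xs ys; apply: tot; apply: sub_s.
have s_trans : {in s & &, forall a b c, r a b -> r b c -> r a c}.
  by move=> x y z xs ys zs; apply: trans; apply: sub_s.
have [m sm m_min] := IH s_tot s_trans s_nil.
case: (tot a m (mem_head a s) (sub_s m sm)) => [ram|rma].
  exists a; first exact: mem_head.
  move=> q; rewrite inE => /predU1P[->//|sq].
  by apply: (trans a m q (mem_head a s) (sub_s m sm) (sub_s q sq) ram (m_min q sq)).
exists m; first exact: sub_s.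
by move=> q; rewrite inE => /predU1P[->|/m_min].
Qed.

Section SquareBounds.
Variable R : realType.
Implicit Types (t c b : R) (n : int).

Lemma sqr_le_sqrB t c : 2 * `|t| <= `|c| -> t ^+ 2 <= (t - c) ^+ 2.
Proof.
have tc : t * c <= `|t| * `|c| by rewrite -normrM ler_norm.
have cE : c ^+ 2 = `|c| ^+ 2 by rewrite real_normK ?num_real.
have := normr_ge0 t; rewrite sqrrB cE; nra.
Qed.

Lemma sqr_lt_sqrB t c : 2 * `|t| < `|c| -> t ^+ 2 < (t - c) ^+ 2.
Proof.
have tc : t * c <= `|t| * `|c| by rewrite -normrM ler_norm.
have cE : c ^+ 2 = `|c| ^+ 2 by rewrite real_normK ?num_real.
have := normr_ge0 t; rewrite sqrrB cE; nra.
Qed.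

Lemma ler_norm_mulrz b n : 0 <= b -> n != 0 -> b <= `|b * n%:~R|.
Proof.
move=> b_ge0 n0; rewrite normrM (ger0_norm b_ge0) ler_peMr // -intr_norm.
by rewrite (ler_int R 1); lia.
Qed.

Lemma sqr_le_sqrB_mulrz t b n : 0 <= b -> 2 * `|t| <= b ->
  t ^+ 2 <= (t - b * n%:~R) ^+ 2.
Proof.
move=> b_ge0 tb; have [->|n0] := eqVneq n 0; first by rewrite mulr0 subr0.
by apply/sqr_le_sqrB/(le_trans tb); exact: ler_norm_mulrz.
Qed.

Lemma sqr_lt_sqrB_mulrz t b n : 0 <= b -> 2 * `|t| < b -> n != 0 ->
  t ^+ 2 < (t - b * n%:~R) ^+ 2.
Proof.
by move=> b_ge0 tb n0; apply/sqr_lt_sqrB/(lt_le_trans tb); exact: ler_norm_mulrz.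
Qed.

Lemma half_offset (m : int) (e : R) : e = 1 \/ e = -1 ->
  exists k : int, `|2 * (2 * k - m)%:~R + e| = 1.
Proof.
have cast (k e' : int) :
    `|2 * (2 * k - m) + e'| = 1 -> `|2 * (2 * k - m)%:~R + e'%:~R| = 1 :> R.
  by move=> h; rewrite -[2 : R]/(2%:~R) -intrM -intrD -intr_norm h.
(* 2k - m takes every value of the parity of m, and one of 0, -e has it. *)
case=> ->.
  by exists (m %/ 2)%Z; apply: (cast _ 1); lia.
by exists ((m + 1) %/ 2)%Z; apply: (cast _ (-1)); lia.
Qed.

Lemma sqr_shifts_norm t b : 0 < b ->
  t ^+ 2 <= (t - b) ^+ 2 -> t ^+ 2 <= (t + b) ^+ 2 -> 2 * `|t| <= b.
Proof.
move=> b_gt0 le_up le_down.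
by have [t0|t0] := lerP 0 t; [rewrite ger0_norm | rewrite ltr0_norm]; nra.
Qed.

End SquareBounds.

Section Lattices.
Variables (R : realType) (d : nat).
Local Notation pt := 'rV[R]_d.
Implicit Types (H : set pt) (a c : R) (q w x y z O eps : pt) (n : 'rV[int]_d).

Definition lattice_coset H a : Prop :=
  (forall y z, H y -> H z -> exists n, y - z = a *: map_mx intr n) /\
  (forall y n, H y -> H (y + a *: map_mx intr n)).

Definition grid_step O eps a w : pt := 2 *: (w - O) + O + (a / 2) *: eps.

Lemma lattice_coord a y z n i :
  z - y = a *: map_mx intr n -> z 0 i = y 0 i + a * (n 0 i)%:~R.
Proof. by move=> /(congr1 (fun M : pt => M 0 i)); rewrite !mxE => <-; ring. Qed.

Lemma ler_edist q y z : (edist q y <= edist q z) =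
  (\sum_(i < d) (q 0 i - y 0 i) ^+ 2 <= \sum_(i < d) (q 0 i - z 0 i) ^+ 2).
Proof. by rewrite /edist ler_sqrt // sumr_ge0 // => i _; exact: sqr_ge0. Qed.

Lemma grid_stepB O eps a w w' :
  grid_step O eps a w - grid_step O eps a w' = 2 *: (w - w').
Proof. by apply/rowP => i; rewrite !mxE; ring. Qed.

Lemma grid_stepB_scale O eps a w w' (v : pt) :
  grid_step O eps a w - grid_step O eps a w' = (2 * a) *: v <-> w - w' = a *: v.
Proof.
rewrite grid_stepB -scalerA; split => [|-> //].
by apply: scalerI; rewrite pnatr_eq0.
Qed.

Lemma grid_stepD O eps a w v :
  grid_step O eps a (w + a *: v) = grid_step O eps a w + (2 * a) *: v.
Proof. by apply/rowP => i; rewrite !mxE; ring. Qed.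

Lemma grid_step_inj O eps a : injective (grid_step O eps a).
Proof.
by move=> w w' /eqP; rewrite -subr_eq0 grid_stepB scaler_eq0 pnatr_eq0 subr_eq0 => /eqP.
Qed.

Lemma lattice_coset_grid_step H a O eps :
  lattice_coset H a <-> lattice_coset (grid_step O eps a @` H) (2 * a).
Proof.
split=> [[Hdiff Hadd]|[Gdiff Gadd]]; split.
- move=> _ _ [w Hw <-] [w' Hw' <-]; have [n wn] := Hdiff w w' Hw Hw'.
  by exists n; apply/grid_stepB_scale.
- move=> _ n [w Hw <-]; exists (w + a *: map_mx intr n); first exact: Hadd.
  exact: grid_stepD.
- move=> w w' Hw Hw'.
  have [n wn] :=
    Gdiff _ _ (imageP (grid_step O eps a) Hw) (imageP (grid_step O eps a) Hw').
  by exists n; move/grid_stepB_scale: wn.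
- move=> w n Hw; have [w' Hw' w'E] := Gadd _ n (imageP (grid_step O eps a) Hw).
  suff -> : w + a *: map_mx intr n = w' by [].
  by apply: (@grid_step_inj O eps a); rewrite grid_stepD w'E.
Qed.

Lemma edist_shift_coord q x c i : edist q x <= edist q (x + c *: delta_mx 0 i) ->
  (q 0 i - x 0 i) ^+ 2 <= (q 0 i - x 0 i - c) ^+ 2.
Proof.
rewrite ler_edist (bigD1 i) //= [X in _ <= X](bigD1 i) //= !mxE !eqxx mulr1 opprD addrA.
have -> : \sum_(j < d | j != i) (q 0 j - (x + c *: delta_mx 0 i) 0 j) ^+ 2 =
          \sum_(j < d | j != i) (q 0 j - x 0 j) ^+ 2.
  by apply: eq_bigr => j ji; rewrite !mxE (negbTE ji) andbF mulr0 addr0.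
by rewrite lerD2r.
Qed.

Section VoronoiCells.
Variables (H : set pt) (a : R).
Hypotheses (a_gt0 : 0 < a) (Hlat : lattice_coset H a).

Lemma Vor_lattice_cube y q : (forall i, 2 * `|q 0 i - y 0 i| <= a) -> H y -> Vor H y q.
Proof.
move=> qy Hy z Hz; have [n zy] := Hlat.1 z y Hz Hy.
rewrite ler_edist; apply: ler_sum => i _; rewrite (lattice_coord i zy) opprD addrA.
exact: sqr_le_sqrB_mulrz (ltW a_gt0) (qy i).
Qed.

Lemma Vor_lattice_uniq y y' q : (forall i, 2 * `|q 0 i - y 0 i| < a) ->
  H y -> H y' -> Vor H y' q -> y' = y.
Proof.
move=> qy Hy Hy' Vq; have [n y'y] := Hlat.1 y' y Hy' Hy.
have [/existsP[i ni]|/existsPn n0] := boolP [exists i, n 0 i != 0]; last first.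
  by apply/rowP => i; rewrite (lattice_coord i y'y) (eqP (negPn (n0 i))) mulr0 addr0.
have := Vq y Hy; rewrite ler_edist leNgt => /negP; case.
rewrite (bigD1 i) //= [X in _ < X](bigD1 i) //= (lattice_coord i y'y) opprD addrA.
apply: ltr_leD; first exact: sqr_lt_sqrB_mulrz (ltW a_gt0) (qy i) ni.
apply: ler_sum => j _; rewrite (lattice_coord j y'y) opprD addrA.
exact: sqr_le_sqrB_mulrz (ltW a_gt0) (ltW (qy j)).
Qed.

Lemma Vor_lattice_norm x q : H x -> Vor H x q -> forall i, 2 * `|q 0 i - x 0 i| <= a.
Proof.
move=> Hx Vq i.
have Hup : H (x + a *: delta_mx 0 i).
  by have := Hlat.2 x (delta_mx 0 i) Hx; rewrite map_delta_mx.
have Hdown : H (x + (- a) *: delta_mx 0 i).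
  by have := Hlat.2 x (- delta_mx 0 i) Hx; rewrite map_mxN map_delta_mx scalerN scaleNr.
have le_down := edist_shift_coord (Vq _ Hdown); rewrite opprK in le_down.
exact: sqr_shifts_norm a_gt0 (edist_shift_coord (Vq _ Hup)) le_down.
Qed.

Lemma exists_parent O eps x : H O -> (forall i, eps 0 i = 1 \/ eps 0 i = -1) -> H x ->
  exists2 y, (grid_step O eps a @` H) y & forall i, 2 * `|x 0 i - y 0 i| = a.
Proof.
move=> HO eps1 Hx; have [m Om] := Hlat.1 O x HO Hx.
have /choice[k hk] i : exists k : int, `|2 * (2 * k - m 0 i)%:~R + eps 0 i| = 1.
  exact: half_offset.
set w := x + a *: map_mx intr (\row_i k i).
exists (grid_step O eps a w); first by exists w => //; exact: Hlat.2.
move=> i; have yE : 2 * (x 0 i - grid_step O eps a w 0 i) =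
    - (a * (2 * (2 * k i - m 0 i)%:~R + eps 0 i)).
  by rewrite /grid_step !mxE (lattice_coord i Om) intrB intrM; field.
have n2 : `|2 : R| = 2 by rewrite ger0_norm.
by rewrite -{1}n2 -normrM yE normrN normrM hk mulr1 gtr0_norm.
Qed.

End VoronoiCells.
End Lattices.

Section GridFamily.
Variables (R : realType) (d : nat).
Implicit Types (lam : R) (s : int) (G : int -> set 'rV[R]_d).

Lemma alphaS lam s : alpha lam (s + 1) = 2 * alpha lam s.
Proof. by rewrite /alpha exprzDr ?expr1z ?unitfE ?pnatr_eq0 //; ring. Qed.

Lemma alpha_gt0 lam s : 0 < lam -> 0 < alpha lam s.
Proof. by move=> lam_gt0; rewrite mulr_gt0 // exprz_gt0. Qed.

Lemma grid_family_lattice lam G : grid_family lam G ->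
  forall s, lattice_coset (G s) (alpha lam s).
Proof.
move=> [G0 Gstep].
have step s : lattice_coset (G s) (alpha lam s) <->
              lattice_coset (G (s + 1)) (alpha lam (s + 1)).
  by have [O [_ [eps [_ ->]]]] := Gstep s; rewrite alphaS; exact: lattice_coset_grid_step.
elim/int_rec => [|n IH|n IH].
- rewrite G0 /alpha expr0z mulr1; split.
  + by move=> _ _ [k _ <-] [k' _ <-]; exists (k - k'); rewrite map_mxB scalerBr.
  + by move=> _ n [k _ <-]; exists (k + n) => //; rewrite map_mxD scalerDr.
- by rewrite intS addrC; apply/(step n).
- by apply/(step (- n.+1%:Z)); rewrite -addn1 PoszD opprD addrNK.
Qed.

End GridFamily.

Section Assignments.
Variables (R : realType) (d : nat) (G : int -> set 'rV[R]_d) (P : set 'rV[R]_d).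
Implicit Types (s : int) (p v y : 'rV[R]_d).

Lemma amapP s p : unique_assignment G P -> P p ->
  G s (amap G s p) /\ Vor (G s) (amap G s p) p.
Proof.
move=> uA Pp; have [y [Ay _]] := uA s p Pp.
exact: (xgetI (P := [set y | G s y /\ Vor (G s) y p]) 0 Ay).
Qed.

Lemma amap_eq s p y : unique_assignment G P -> P p ->
  G s y -> Vor (G s) y p -> amap G s p = y.
Proof.
move=> uA Pp Gy Vy; have [y0 [_ y0_uniq]] := uA s p Pp.
apply: xget_unique; first by split.
by move=> y' /y0_uniq <-; apply: y0_uniq.
Qed.

Lemma bmapP (le : 'rV[R]_d -> 'rV[R]_d -> Prop) s v p :
  finite_set P -> total_order_on P le -> P p -> Vor (G s) v p ->
  P (bmap G P le s v) /\ Vor (G s) v (bmap G P le s v).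
Proof.
move=> finP [_ [_ [le_trans3 le_total]]] Pp Vp.
have [S AS] := (finite_seqP _).1 (finite_setIl (Vor (G s) v) finP).
have inS q : q \in S <-> (P `&` Vor (G s) v) q by rewrite AS.
pose r q q' := edist q v < edist q' v \/ edist q v = edist q' v /\ le q q'.
have [m /inS[Pm Vm] m_min] : exists2 m, m \in S & {in S, forall q, r m q}.
  apply: seq_total_min.
  - move=> q q' /inS[Pq _] /inS[Pq' _]; rewrite /r.
    case: (ltgtP (edist q v) (edist q' v)) => [||->]; try by [left; left|right; left].
    by case: (le_total q q' Pq Pq'); [left|right]; right.
  - move=> q1 q2 q3 /inS[P1 _] /inS[P2 _] /inS[P3 _]; rewrite /r.
    case=> [lt12|[-> le12]] [lt23|[<- le23]].
    + by left; exact: lt_trans lt23.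
    + by left.
    + by left.
    + by right; split => //; exact: le_trans3 le23.
  - by apply/eqP => S0; have /inS := conj Pp Vp; rewrite S0.
have [Pb [Vb _]] : [set q | P q /\ Vor (G s) v q /\
    forall q', P q' -> Vor (G s) v q' -> r q q'] (bmap G P le s v).
  apply: (xgetI 0 (x := m)); do 2!split => //.
  by move=> q' Pq' Vq'; apply: m_min; exact/inS.
by split.
Qed.

End Assignments.

Theorem lemma5 (R : realType) (d : nat) (lam : R) (G : int -> set 'rV[R]_d)
    (P : set 'rV[R]_d) (le : 'rV[R]_d -> 'rV[R]_d -> Prop) :
  (0 < d)%N -> 0 < lam -> grid_family lam G ->
  finite_set P -> total_order_on P le -> unique_assignment G P ->
  forall (s : int) (x : 'rV[R]_d), active G P s x ->
    gmap G s x = amap G (s + 1)%R (bmap G P le s x).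
Proof.
move=> _ lam_gt0 hG finP ord uA s _ [p Pp <-].
set x := amap G s p; set a := alpha lam s.
have [Gx Vxp] := amapP s uA Pp.
have [Pb Vxb] := bmapP finP ord Pp Vxp; set b := bmap G P le s x in Pb Vxb *.
have a_gt0 : 0 < a := alpha_gt0 s lam_gt0.
have a2_gt0 : 0 < 2 * a by rewrite mulr_gt0.
have lat1 := grid_family_lattice hG (s + 1); rewrite alphaS in lat1.
have [O [GO [eps [eps1 G1]]]] := hG.2 s.
have [y G1y xy] := exists_parent a_gt0 (grid_family_lattice hG s) GO eps1 Gx.
have {G1y} Gy : G (s + 1) y by rewrite G1.
have Vyx : Vor (G (s + 1)) y x.
  by apply: (Vor_lattice_cube a2_gt0 lat1 _ Gy) => i; rewrite xy; lra.
have -> : gmap G s x = y.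
  apply: xget_unique; first by split.
  move=> y' [Gy' Vy']; apply: (Vor_lattice_uniq a2_gt0 lat1 _ Gy Gy' Vy') => i.
  by rewrite xy; lra.
have Vyb : Vor (G (s + 1)) y b.
  apply: (Vor_lattice_cube a2_gt0 lat1 _ Gy) => i.
  have := Vor_lattice_norm a_gt0 (grid_family_lattice hG s) Gx Vxb i.
  have := ler_distD (x 0 i) (b 0 i) (y 0 i); have := xy i; lra.
by rewrite (amap_eq uA Pb Gy Vyb).
Qed.
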